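(* Let $n\ge 2$ and $P,Q\in\Gamma_n$. Then \[ D_{I\Delta}\le \tfrac23 D_{h\Delta}\le 2D_{hI}\le D_{TJ}, \] \[ D_{I\Delta}\le \tfrac23 D_{h\Delta}\le \tfrac12 D_{J\Delta}\le \tfrac13 D_{T\Delta}\le D_{TJ}, \] and \[ D_{TJ}\le \tfrac23 D_{Th}\le 2D_{Jh}\le \tfrac16 D_{\Psi\Delta}\le \tfrac15 D_{\Psi I}\le \tfrac29 D_{\Psi h}\le \tfrac14 D_{\Psi J}\le \tfrac13 D_{\Psi T}, \] where all quantities are evaluated at $(P\|Q)$.
   Context: $\Gamma_n=\{P=(p_1,\dots,p_n): p_i>0,\ \sum_{i=1}^n p_i=1\}$. For $P,Q\in\Gamma_n$: $h(P\|Q)=\frac12\sum_{i=1}^n(\sqrt{p_i}-\sqrt{q_i})^2$; $\Delta(P\|Q)=\sum_{i=1}^n\frac{(p_i-q_i)^2}{p_i+q_i}$; $\Psi(P\|Q)=\sum_{i=1}^n\frac{(p_i-q_i)^2(p_i+q_i)}{p_iq_i}$; $J(P\|Q)=\sum_{i=1}^n(p_i-q_i)\ln\frac{p_i}{q_i}$; $I(P\|Q)=\frac12\Big[\sum_{i=1}^n p_i\ln\frac{2p_i}{p_i+q_i}+\sum_{i=1}^n q_i\ln\frac{2q_i}{p_i+q_i}\Big]$; $T(P\|Q)=\sum_{i=1}^n\frac{p_i+q_i}{2}\ln\frac{p_i+q_i}{2\sqrt{p_iq_i}}$. Differences: $D_{\Psi T}=\frac1{16}\Psi-T$, $D_{\Psi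 J}=\frac1{16}\Psi-\frac18J$, $D_{\Psi h}=\frac1{16}\Psi-h$, $D_{\Psi I}=\frac1{16}\Psi-I$, $D_{\Psi\Delta}=\frac1{16}\Psi-\frac14\Delta$, $D_{TJ}=T-\frac18J$, $D_{Th}=T-h$, $D_{T\Delta}=T-\frac14\Delta$, $D_{Jh}=\frac18J-h$, $D_{J\Delta}=\frac18J-\frac14\Delta$, $D_{hI}=h-I$, $D_{h\Delta}=h-\frac14\Delta$, $D_{I\Delta}=I-\frac14\Delta$ (all evaluated at $(P\|Q)$). *)

(* concrete reals R. Probability vectors are functions nat -> R,
   only indices 0..n-1 are relevant. *)
From Stdlib Require Import Reals.
Open Scope R_scope.

Fixpoint sumR (n : nat) (f : nat -> R) : R :=
  match n with
  | O => 0
  | S m => sumR m f + f m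
  end.

Definition Gamma (n : nat) (p : nat -> R) : Prop :=
  (forall i, (i < n)%nat -> 0 < p i) /\ sumR n p = 1.

Definition hel (n : nat) (p q : nat -> R) : R :=
  / 2 * sumR n (fun i => (sqrt (p i) - sqrt (q i)) ^ 2).
Definition Delta (n : nat) (p q : nat -> R) : R :=
  sumR n (fun i => (p i - q i) ^ 2 / (p i + q i)).
Definition Psi (n : nat) (p q : nat -> R) : R :=
  sumR n (fun i => (p i - q i) ^ 2 * (p i + q i) / (p i * q i)).
Definition Jdiv (n : nat) (p q : nat -> R) : R :=
  sumR n (fun i => (p i - q i) * ln (p i / q i)).
Definition Idiv (n : nat) (p q : nat -> R) : R :=
  / 2 * (sumR n (fun i => p i * ln (2 * p i / (p i + q i)))
         + sumR n (fun i => q i * ln (2 * q i / (p i + q i)))).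
Definition Tdiv (n : nat) (p q : nat -> R) : R :=
  sumR n (fun i => (p i + q i) / 2 * ln ((p i + q i) / (2 * sqrt (p i * q i)))).

Section Diffs.
Variables (n : nat) (p q : nat -> R).
Definition D_PsiT := / 16 * Psi n p q - Tdiv n p q.
Definition D_PsiJ := / 16 * Psi n p q - / 8 * Jdiv n p q.
Definition D_Psih := / 16 * Psi n p q - hel n p q.
Definition D_PsiI := / 16 * Psi n p q - Idiv n p q.
Definition D_PsiDelta := / 16 * Psi n p q - / 4 * Delta n p q.
Definition D_TJ := Tdiv n p q - / 8 * Jdiv n p q.
Definition D_Th := Tdiv n p q - hel n p q.
Definition D_TDelta := Tdiv n p q - / 4 * Delta n p q.
Definition D_Jh := / 8 * Jdiv n p q - hel n p q.
Definition D_JDelta := / 8 * Jdiv n p q - / 4 * Delta n p q.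
Definition D_hI := hel n p q - Idiv n p q.
Definition D_hDelta := hel n p q - / 4 * Delta n p q.
Definition D_IDelta := Idiv n p q - / 4 * Delta n p q.
End Diffs.

(* Every divergence of the statement is a Csiszar f-divergence
   sum_i q_i f(p_i / q_i) with an explicit generator f, so each link of the
   chains asserts that the divergence of a fixed linear combination phi of the
   six generators is nonnegative.  It suffices that phi >= 0 on (0, oo), and as
   phi(1) = phi'(1) = 0 this follows from the convexity of phi.  Substituting
   x = s^2 clears the square roots of phi'', and then
   4 s^6 (s^2 + 1)^3 phi''(s^2) = (s - 1)^4 Q(s) for a polynomial Q that is
   visibly nonnegative for s > 0. *)

From Pilot Require Import Defs.
From Stdlib Require Import Reals Lra.
From Coquelicot Require Import Coquelicot.
(* Coquelicot also defines [Delta]. *)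
Import Defs.
Open Scope R_scope.

Lemma sumR_ext n f g : (forall i, (i < n)%nat -> f i = g i) -> sumR n f = sumR n g.
Proof.
  induction n as [|n IH]; intros Hfg; cbn [sumR]; [reflexivity|].
  rewrite IH, Hfg by auto with arith. reflexivity.
Qed.

Lemma sumR_plus n f g : sumR n f + sumR n g = sumR n (fun i => f i + g i).
Proof. induction n as [|n IH]; cbn [sumR]; [ring | rewrite <- IH; ring]. Qed.

Lemma sumR_scal c n f : c * sumR n f = sumR n (fun i => c * f i).
Proof. induction n as [|n IH]; cbn [sumR]; [ring | rewrite <- IH; ring]. Qed.

Lemma sumR_nonneg n f : (forall i, (i < n)%nat -> 0 <= f i) -> 0 <= sumR n f.
Proof.
  induction n as [|n IH]; intros Hf; cbn [sumR]; [lra|].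
  apply Rplus_le_le_0_compat; [apply IH; auto with arith | apply Hf; auto with arith].
Qed.

Definition pos_on (n : nat) (p : nat -> R) : Prop := forall i, (i < n)%nat -> 0 < p i.

Definition csiszar (f : R -> R) (n : nat) (p q : nat -> R) : R :=
  sumR n (fun i => q i * f (p i / q i)).

Lemma csiszar_nonneg f n p q :
  (forall x, 0 < x -> 0 <= f x) -> pos_on n p -> pos_on n q -> 0 <= csiszar f n p q.
Proof.
  intros Hf Hp Hq. apply sumR_nonneg. intros i Hi.
  specialize (Hp i Hi). specialize (Hq i Hi).
  apply Rmult_le_pos; [lra | apply Hf, Rdiv_lt_0_compat; assumption].
Qed.

Definition fPsi x := (x - 1) ^ 2 * (x + 1) / x.
Definition fT x := (x + 1) / 2 * ln ((x + 1) / (2 * sqrt x)).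
Definition fJ x := (x - 1) * ln x.
Definition fh x := (sqrt x - 1) ^ 2 / 2.
Definition fI x := / 2 * (x * ln (2 * x / (x + 1)) + ln (2 / (x + 1))).
Definition fDelta x := (x - 1) ^ 2 / (x + 1).

Section Perspective.
Variables a b : R.
Hypotheses (Ha : 0 < a) (Hb : 0 < b).

Lemma fPsi_persp : (a - b) ^ 2 * (a + b) / (a * b) = b * fPsi (a / b).
Proof. unfold fPsi. field. lra. Qed.

Lemma fDelta_persp : (a - b) ^ 2 / (a + b) = b * fDelta (a / b).
Proof. unfold fDelta. field. lra. Qed.

Lemma fJ_persp : (a - b) * ln (a / b) = b * fJ (a / b).
Proof. unfold fJ. field. lra. Qed.

Lemma fI_persp :
  / 2 * (a * ln (2 * a / (a + b)) + b * ln (2 * b / (a + b))) = b * fI (a / b).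
Proof.
  unfold fI.
  replace (2 * (a / b) / (a / b + 1)) with (2 * a / (a + b)) by (field; lra).
  replace (2 / (a / b + 1)) with (2 * b / (a + b)) by (field; lra).
  field. lra.
Qed.

Lemma fh_persp : / 2 * (sqrt a - sqrt b) ^ 2 = b * fh (a / b).
Proof.
  unfold fh. rewrite sqrt_div_alt by assumption.
  pose proof (sqrt_lt_R0 b Hb). pose proof (sqrt_sqrt b (Rlt_le _ _ Hb)) as Eb.
  set (sb := sqrt b) in *. rewrite <- Eb.
  field. lra.
Qed.

Lemma fT_persp :
  (a + b) / 2 * ln ((a + b) / (2 * sqrt (a * b))) = b * fT (a / b).
Proof.
  unfold fT. rewrite sqrt_div_alt, sqrt_mult by lra.
  pose proof (sqrt_lt_R0 a Ha). pose proof (sqrt_lt_R0 b Hb).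
  pose proof (sqrt_sqrt b (Rlt_le _ _ Hb)) as Eb.
  replace ((a / b + 1) / (2 * (sqrt a / sqrt b))) with ((a + b) / (2 * (sqrt a * sqrt b))).
  - field. lra.
  - set (sb := sqrt b) in *. rewrite <- Eb. field. lra.
Qed.

End Perspective.

Section Representation.
Variables (n : nat) (p q : nat -> R).
Hypotheses (Hp : pos_on n p) (Hq : pos_on n q).

Lemma Psi_csiszar : Psi n p q = csiszar fPsi n p q.
Proof. apply sumR_ext; intros i Hi; apply fPsi_persp; auto. Qed.

Lemma Delta_csiszar : Delta n p q = csiszar fDelta n p q.
Proof. apply sumR_ext; intros i Hi; apply fDelta_persp; auto. Qed.

Lemma Jdiv_csiszar : Jdiv n p q = csiszar fJ n p q.
Proof. apply sumR_ext; intros i Hi; apply fJ_persp; auto. Qed.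

Lemma Tdiv_csiszar : Tdiv n p q = csiszar fT n p q.
Proof. apply sumR_ext; intros i Hi; apply fT_persp; auto. Qed.

Lemma hel_csiszar : hel n p q = csiszar fh n p q.
Proof.
  unfold hel. rewrite sumR_scal.
  apply sumR_ext; intros i Hi; apply fh_persp; auto.
Qed.

Lemma Idiv_csiszar : Idiv n p q = csiszar fI n p q.
Proof.
  unfold Idiv. rewrite sumR_plus, sumR_scal.
  apply sumR_ext; intros i Hi; apply fI_persp; auto.
Qed.

End Representation.

Definition fPsi' x := 2 * x - 1 - / x ^ 2.
Definition fT' x := / 2 * ln ((x + 1) / (2 * sqrt x)) + (x - 1) / (4 * x).
Definition fJ' x := ln x + 1 - / x.
Definition fh' x := / 2 * (1 - / sqrt x).
Definition fI' x := / 2 * ln (2 * x / (x + 1)).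
Definition fDelta' x := (x - 1) * (x + 3) / (x + 1) ^ 2.

Definition fPsi'' x := 2 + 2 / x ^ 3.
Definition fT'' x := (x ^ 2 + 1) / (4 * x ^ 2 * (x + 1)).
Definition fJ'' x := / x + / x ^ 2.
Definition fh'' x := / (4 * x * sqrt x).
Definition fI'' x := / (2 * x * (x + 1)).
Definition fDelta'' x := 8 / (x + 1) ^ 3.

Section Derivatives.
Variable x : R.
Hypothesis Hx : 0 < x.

Let sqrt_pos : 0 < sqrt x.
Proof. apply sqrt_lt_R0, Hx. Qed.

Let sqrt_sq : sqrt x * sqrt x = x.
Proof. apply sqrt_sqrt; lra. Qed.

Ltac x_as_square :=
  set (s := sqrt x) in *; clearbody s; rewrite <- sqrt_sq.

Lemma is_derive_fPsi : is_derive fPsi x (fPsi' x).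
Proof. unfold fPsi, fPsi'. auto_derive; [lra | field; lra]. Qed.

Lemma is_derive_fPsi' : is_derive fPsi' x (fPsi'' x).
Proof. unfold fPsi', fPsi''. auto_derive; [nra | field; lra]. Qed.

Lemma is_derive_fT : is_derive fT x (fT' x).
Proof.
  unfold fT, fT'. auto_derive.
  - repeat split; try lra. apply Rdiv_lt_0_compat; lra.
  - set (L := ln _). clearbody L. x_as_square. field. lra.
Qed.

Lemma is_derive_fT' : is_derive fT' x (fT'' x).
Proof.
  unfold fT', fT''. auto_derive.
  - repeat split; try lra. apply Rdiv_lt_0_compat; lra.
  - x_as_square. field. lra.
Qed.

Lemma is_derive_fJ : is_derive fJ x (fJ' x).
Proof. unfold fJ, fJ'. auto_derive; [lra | field; lra]. Qed.

Lemma is_derive_fJ' : is_derive fJ' x (fJ'' x).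
Proof. unfold fJ', fJ''. auto_derive; [lra | field; lra]. Qed.

Lemma is_derive_fh : is_derive fh x (fh' x).
Proof. unfold fh, fh'. auto_derive; [lra | field; lra]. Qed.

Lemma is_derive_fh' : is_derive fh' x (fh'' x).
Proof. unfold fh', fh''. auto_derive; [repeat split; lra | x_as_square; field; lra]. Qed.

Lemma is_derive_fI : is_derive fI x (fI' x).
Proof.
  unfold fI, fI'. auto_derive.
  - repeat split; try lra; apply Rdiv_lt_0_compat; lra.
  - unfold Rdiv. field. lra.
Qed.

Lemma is_derive_fI' : is_derive fI' x (fI'' x).
Proof.
  unfold fI', fI''. auto_derive.
  - repeat split; try lra; apply Rdiv_lt_0_compat; lra.
  - field. lra.
Qed.

Lemma is_derive_fDelta : is_derive fDelta x (fDelta' x).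
Proof. unfold fDelta, fDelta'. auto_derive; [lra | field; lra]. Qed.

Lemma is_derive_fDelta' : is_derive fDelta' x (fDelta'' x).
Proof. unfold fDelta', fDelta''. auto_derive; [nra | field; lra]. Qed.

End Derivatives.

Lemma nonneg_of_convex_flat f f' f'' a :
  0 < a ->
  (forall x, 0 < x -> is_derive f x (f' x)) ->
  (forall x, 0 < x -> is_derive f' x (f'' x)) ->
  (forall x, 0 < x -> 0 <= f'' x) ->
  f a = 0 -> f' a = 0 ->
  forall x, 0 < x -> 0 <= f x.
Proof.
  intros Ha Df Df' Hf'' Hfa Hf'a x Hx.
  assert (mvt : forall g g' u v, 0 < u < v ->
            (forall y, 0 < y -> is_derive g y (g' y)) ->
            exists c, g v - g u = g' c * (v - u) /\ u < c < v).
  { intros g g' u v Huv Dg. apply MVT_cor2; [lra|].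
    intros c Hc. apply is_derive_Reals, Dg. lra. }
  destruct (Rtotal_order x a) as [Hlt | [-> | Hgt]].
  - destruct (mvt f f' x a) as [c [Ec Hc]]; [lra | exact Df |].
    destruct (mvt f' f'' c a) as [d [Ed Hd]]; [lra | exact Df' |].
    assert (0 <= f'' d) by (apply Hf''; lra).
    assert (f' c <= 0) by nra. nra.
  - lra.
  - destruct (mvt f f' a x) as [c [Ec Hc]]; [lra | exact Df |].
    destruct (mvt f' f'' a c) as [d [Ed Hd]]; [lra | exact Df' |].
    assert (0 <= f'' d) by (apply Hf''; lra).
    assert (0 <= f' c) by nra. nra.
Qed.

Record weights := Weights { wPsi : R; wT : R; wJ : R; wh : R; wI : R; wDelta : R }.

Definition combo (w : weights) (n : nat) (p q : nat -> R) : R :=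
  wPsi w * Psi n p q + wT w * Tdiv n p q + wJ w * Jdiv n p q
  + wh w * hel n p q + wI w * Idiv n p q + wDelta w * Delta n p q.

Definition combo_gen (w : weights) (x : R) : R :=
  wPsi w * fPsi x + wT w * fT x + wJ w * fJ x
  + wh w * fh x + wI w * fI x + wDelta w * fDelta x.

Definition combo_gen' (w : weights) (x : R) : R :=
  wPsi w * fPsi' x + wT w * fT' x + wJ w * fJ' x
  + wh w * fh' x + wI w * fI' x + wDelta w * fDelta' x.

Definition combo_gen'' (w : weights) (x : R) : R :=
  wPsi w * fPsi'' x + wT w * fT'' x + wJ w * fJ'' x
  + wh w * fh'' x + wI w * fI'' x + wDelta w * fDelta'' x.

Lemma combo_csiszar w n p q :
  pos_on n p -> pos_on n q -> combo w n p q = csiszar (combo_gen w) n p q.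
Proof.
  intros Hp Hq. unfold combo.
  rewrite Psi_csiszar, Tdiv_csiszar, Jdiv_csiszar, hel_csiszar, Idiv_csiszar,
    Delta_csiszar by assumption.
  unfold csiszar. rewrite !sumR_scal, !sumR_plus.
  apply sumR_ext; intros i _. unfold combo_gen. ring.
Qed.

Lemma is_derive_combo_gen w x : 0 < x -> is_derive (combo_gen w) x (combo_gen' w x).
Proof.
  intros Hx. unfold combo_gen, combo_gen'.
  repeat apply @is_derive_plus; apply @is_derive_scal;
    auto using is_derive_fPsi, is_derive_fT, is_derive_fJ, is_derive_fh,
      is_derive_fI, is_derive_fDelta.
Qed.

Lemma is_derive_combo_gen' w x : 0 < x -> is_derive (combo_gen' w) x (combo_gen'' w x).
Proof.
  intros Hx. unfold combo_gen', combo_gen''.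
  repeat apply @is_derive_plus; apply @is_derive_scal;
    auto using is_derive_fPsi', is_derive_fT', is_derive_fJ', is_derive_fh',
      is_derive_fI', is_derive_fDelta'.
Qed.

Lemma combo_gen_1 w : combo_gen w 1 = 0.
Proof.
  unfold combo_gen, fPsi, fT, fJ, fh, fI, fDelta. rewrite sqrt_1.
  replace (2 * 1 / (1 + 1)) with 1 by field. replace (2 / (1 + 1)) with 1 by field.
  replace ((1 + 1) / (2 * 1)) with 1 by field. rewrite ln_1. field.
Qed.

Lemma combo_gen'_1 w : combo_gen' w 1 = 0.
Proof.
  unfold combo_gen', fPsi', fT', fJ', fh', fI', fDelta'. rewrite sqrt_1.
  replace (2 * 1 / (1 + 1)) with 1 by field.
  replace ((1 + 1) / (2 * 1)) with 1 by field. rewrite ln_1. field.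
Qed.

Lemma combo_nonneg w n p q :
  (forall s, 0 < s -> 0 <= combo_gen'' w (s ^ 2)) ->
  pos_on n p -> pos_on n q -> 0 <= combo w n p q.
Proof.
  intros Hw Hp Hq. rewrite combo_csiszar by assumption.
  apply csiszar_nonneg; [| assumption | assumption].
  apply (nonneg_of_convex_flat _ (combo_gen' w) (combo_gen'' w) 1); try lra.
  - apply is_derive_combo_gen.
  - apply is_derive_combo_gen'.
  - intros x Hx. rewrite <- (pow2_sqrt x) by lra. apply Hw, sqrt_lt_R0, Hx.
  - apply combo_gen_1.
  - apply combo_gen'_1.
Qed.

Lemma combo_gen''_sq_nonneg w (Q : R -> R) :
  (forall s, 0 < s -> combo_gen'' w (s ^ 2) * (4 * s ^ 6 * (s ^ 2 + 1) ^ 3) = (s - 1) ^ 4 * Q s) ->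
  (forall s, 0 < s -> 0 <= Q s) ->
  forall s, 0 < s -> 0 <= combo_gen'' w (s ^ 2).
Proof.
  intros Hcert HQ s Hs.
  assert (Hden : 0 < 4 * s ^ 6 * (s ^ 2 + 1) ^ 3).
  { apply Rmult_lt_0_compat; [apply Rmult_lt_0_compat; [lra | apply pow_lt; lra] | apply pow_lt; nra]. }
  assert (Hnum : 0 <= (s - 1) ^ 4 * Q s).
  { apply Rmult_le_pos; [| auto].
    replace ((s - 1) ^ 4) with (((s - 1) ^ 2) ^ 2) by ring. apply pow2_ge_0. }
  rewrite <- Hcert in Hnum by assumption. nra.
Qed.

Ltac unfold_differences :=
  unfold D_IDelta, D_hDelta, D_hI, D_TJ, D_JDelta, D_TDelta, D_Th, D_Jh,
    D_PsiDelta, D_PsiI, D_Psih, D_PsiJ, D_PsiT in *.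

Ltac nonneg_monomial :=
  first [ lra | apply pow2_ge_0 | apply pow_le; lra
        | apply Rmult_le_pos; nonneg_monomial ].

Ltac solve_certificate :=
  unfold combo_gen'', fPsi'', fT'', fJ'', fh'', fI'', fDelta'';
  cbn [wPsi wT wJ wh wI wDelta]; rewrite sqrt_pow2 by lra;
  field; repeat split; apply Rgt_not_eq; first [nra | apply pow_lt; nra].

Ltac nonneg_polynomial := repeat apply Rplus_le_le_0_compat; nonneg_monomial.

Section Inequalities.
Variables (n : nat) (p q : nat -> R).
Hypotheses (Hp : pos_on n p) (Hq : pos_on n q).

Ltac by_weights w Q :=
  enough (0 <= combo w n p q)
    by (unfold combo in *; cbn [wPsi wT wJ wh wI wDelta] in *; unfold_differences; lra);
  apply combo_nonneg; [| exact Hp | exact Hq];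
  apply (combo_gen''_sq_nonneg w Q); intros s Hs; cbv beta;
  [solve_certificate | nonneg_polynomial].

Lemma D_IDelta_le_hDelta :
  D_IDelta n p q <= 2/3 * D_hDelta n p q.
Proof.
  by_weights (Weights 0 0 0 (2/3) (-1) (1/12))
    (fun s => 2/3 * s^3 + 2/3 * s^4 + 2/3 * s^5).
Qed.

Lemma D_hI_le_TJ :
  2 * D_hI n p q <= D_TJ n p q.
Proof.
  by_weights (Weights 0 1 (-1/8) (-2) 2 0)
    (fun s => 1/2 * s^2 + s^4 + 1/2 * s^6).
Qed.

Lemma D_hDelta_le_JDelta :
  2/3 * D_hDelta n p q <= 1/2 * D_JDelta n p q.
Proof.
  by_weights (Weights 0 0 (1/16) (-2/3) 0 (1/24))
    (fun s => 1/4 * s^2 + 1/3 * s^3 + 5/6 * s^4 + 1/3 * s^5 + 1/4 * s^6).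
Qed.

Lemma D_JDelta_le_TDelta :
  1/2 * D_JDelta n p q <= 1/3 * D_TDelta n p q.
Proof.
  by_weights (Weights 0 (1/3) (-1/16) 0 0 (1/24))
    (fun s => 1/12 * s^2 + 1/3 * s^3 + 1/2 * s^4 + 1/3 * s^5 + 1/12 * s^6).
Qed.

Lemma D_TJ_le_Th :
  D_TJ n p q <= 2/3 * D_Th n p q.
Proof.
  by_weights (Weights 0 (-1/3) (1/8) (-2/3) 0 0)
    (fun s => 1/6 * s^2 + 1/3 * s^4 + 1/6 * s^6).
Qed.

Lemma D_Jh_le_PsiDelta :
  2 * D_Jh n p q <= 1/6 * D_PsiDelta n p q.
Proof.
  by_weights (Weights (1/96) 0 (-1/4) 2 0 (-1/24))
    (fun s => 1/12 + 1/3 * s + 1/12 * s^2 + 1/2 * s^3 + 1/6 * s^3 * (s - 1)^2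
              + 1/2 * s^5 + 1/12 * s^6 + 1/3 * s^7 + 1/12 * s^8).
Qed.

Lemma D_PsiDelta_le_PsiI :
  1/6 * D_PsiDelta n p q <= 1/5 * D_PsiI n p q.
Proof.
  by_weights (Weights (1/480) 0 0 0 (-1/5) (1/24))
    (fun s => 1/60 + 1/15 * s + 13/60 * s^2 + 8/15 * s^3 + 11/15 * s^4
              + 8/15 * s^5 + 13/60 * s^6 + 1/15 * s^7 + 1/60 * s^8).
Qed.

Lemma D_PsiI_le_Psih :
  1/5 * D_PsiI n p q <= 2/9 * D_Psih n p q.
Proof.
  by_weights (Weights (1/720) 0 0 (-2/9) (1/5) 0)
    (fun s => 1/90 + 2/45 * s + 13/90 * s^2 + 2/15 * s^3 + 4/15 * s^4
              + 2/15 * s^5 + 13/90 * s^6 + 2/45 * s^7 + 1/90 * s^8).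
Qed.

Lemma D_Psih_le_PsiJ :
  2/9 * D_Psih n p q <= 1/4 * D_PsiJ n p q.
Proof.
  by_weights (Weights (1/576) 0 (-1/32) (2/9) 0 0)
    (fun s => 1/72 + 1/18 * s + 1/18 * s^2 + 1/6 * s^3 + 1/12 * s^4
              + 1/6 * s^5 + 1/18 * s^6 + 1/18 * s^7 + 1/72 * s^8).
Qed.

Lemma D_PsiJ_le_PsiT :
  1/4 * D_PsiJ n p q <= 1/3 * D_PsiT n p q.
Proof.
  by_weights (Weights (1/192) (-1/3) (1/32) 0 0 0)
    (fun s => 1/24 + 1/6 * s + 1/3 * s^2 + 1/2 * s^3 + 7/12 * s^4
              + 1/2 * s^5 + 1/3 * s^6 + 1/6 * s^7 + 1/24 * s^8).
Qed.

End Inequalities.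

Theorem theorem5p1 (n : nat) (p q : nat -> R) :
  (2 <= n)%nat -> Gamma n p -> Gamma n q ->
  (D_IDelta n p q <= 2/3 * D_hDelta n p q
   /\ 2/3 * D_hDelta n p q <= 2 * D_hI n p q
   /\ 2 * D_hI n p q <= D_TJ n p q)
  /\
  (D_IDelta n p q <= 2/3 * D_hDelta n p q
   /\ 2/3 * D_hDelta n p q <= 1/2 * D_JDelta n p q
   /\ 1/2 * D_JDelta n p q <= 1/3 * D_TDelta n p q
   /\ 1/3 * D_TDelta n p q <= D_TJ n p q)
  /\
  (D_TJ n p q <= 2/3 * D_Th n p q
   /\ 2/3 * D_Th n p q <= 2 * D_Jh n p q
   /\ 2 * D_Jh n p q <= 1/6 * D_PsiDelta n p q
   /\ 1/6 * D_PsiDelta n p q <= 1/5 * D_PsiI n p q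
   /\ 1/5 * D_PsiI n p q <= 2/9 * D_Psih n p q
   /\ 2/9 * D_Psih n p q <= 1/4 * D_PsiJ n p q
   /\ 1/4 * D_PsiJ n p q <= 1/3 * D_PsiT n p q).
Proof.
  intros _ [Hp _] [Hq _].
  pose proof (D_IDelta_le_hDelta n p q Hp Hq).
  pose proof (D_hI_le_TJ n p q Hp Hq).
  pose proof (D_hDelta_le_JDelta n p q Hp Hq).
  pose proof (D_JDelta_le_TDelta n p q Hp Hq).
  pose proof (D_TJ_le_Th n p q Hp Hq).
  pose proof (D_Jh_le_PsiDelta n p q Hp Hq).
  pose proof (D_PsiDelta_le_PsiI n p q Hp Hq).
  pose proof (D_PsiI_le_Psih n p q Hp Hq).
  pose proof (D_Psih_le_PsiJ n p q Hp Hq).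
  pose proof (D_PsiJ_le_PsiT n p q Hp Hq).
  (* The three remaining links are twice the links before them, because
     D_hI = D_hDelta - D_IDelta, D_TJ = D_TDelta - D_JDelta and D_Jh = D_Th - D_TJ. *)
  unfold_differences.
  repeat split; lra.
Qed.
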